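(* For every integer $n\geqslant 2$, $\mathbf{I}\mathbb{N}_{\infty}^n$ is an $F$-inverse semigroup.
   Context: $\mathbb{N}=\{1,2,3,\ldots\}$ and $\mathbb{N}^n$ carries the Euclidean metric $d$. A partial isometry of $\mathbb{N}^n$ is an injective partial map $\alpha\colon\mathbb{N}^n\rightharpoonup\mathbb{N}^n$ with $d((\mathbf{x})\alpha,(\mathbf{y})\alpha)=d(\mathbf{x},\mathbf{y})$ for all $\mathbf{x},\mathbf{y}\in\operatorname{dom}\alpha$; it is cofinite if $\mathbb{N}^n\setminus\operatorname{dom}\alpha$ and $\mathbb{N}^n\setminus\operatorname{ran}\alpha$ are finite. $\mathbf{I}\mathbb{N}_{\infty}^n$ is the monoid of all partial cofinite isometries of $\mathbb{N}^n$ under composition of partial maps. An inverse semigroup $S$ is $F$-inverse if every element of $S$ lies below a unique maximal element with respect to the natural partial order ($s\preccurlyeq t$ iff $s=te$ for some idempotent $e$), equivalently every class of the least group congruence has a maximum element. *)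

From mathcomp Require Import all_boot.
Set Implicit Arguments. Unset Strict Implicit. Unset Printing Implicit Defensive.

Definition closed_under (T : Type) (S : T -> Prop) (mul : T -> T -> T) :=
  forall a b, S a -> S b -> S (mul a b).

Definition assoc_on (T : Type) (S : T -> Prop) (mul : T -> T -> T) :=
  forall a b c, S a -> S b -> S c -> mul a (mul b c) = mul (mul a b) c.

Definition unique_inverses (T : Type) (S : T -> Prop) (mul : T -> T -> T) :=
  forall a, S a -> exists! b, S b /\ mul (mul a b) a = a /\ mul (mul b a) b = b.

Definition inverse_semigroup (T : Type) (S : T -> Prop) (mul : T -> T -> T) :=
  [/\ closed_under S mul, assoc_on S mul & unique_inverses S mul].

Definition idempotent (T : Type) (S : T -> Prop) (mul : T -> T -> T) (e : T) :=
  S e /\ mul e e = e.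

Definition npo (T : Type) (S : T -> Prop) (mul : T -> T -> T) (s t : T) :=
  exists e, idempotent S mul e /\ s = mul t e.

Definition npo_maximal (T : Type) (S : T -> Prop) (mul : T -> T -> T) (t : T) :=
  S t /\ forall u, S u -> npo S mul t u -> u = t.

Definition F_inverse (T : Type) (S : T -> Prop) (mul : T -> T -> T) :=
  inverse_semigroup S mul /\
  forall s, S s -> exists! t, npo_maximal S mul t /\ npo S mul s t.

(* Ambient point type: n-tuples of nat; N^n = tuples with all entries >= 1. *)
Definition pt (n : nat) := n.-tuple nat.

Definition inNn (n : nat) (x : pt n) : bool := all (fun k => 0 < k) x.

Definition pmapN (n : nat) := pt n -> option (pt n).

(* composition of partial maps, left-to-right: (x)(a b) = ((x)a)b *)
Definition pmcomp (n : nat) (a b : pmapN n) : pmapN n :=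
  fun x => obind b (a x).

Definition absdiff (a b : nat) : nat := maxn a b - minn a b.

(* squared Euclidean distance; d x y = d u v  iff  sqdist x y = sqdist u v *)
Definition sqdist (n : nat) (x y : pt n) : nat :=
  \sum_(i < n) (absdiff (tnth x i) (tnth y i)) ^ 2.

Definition partial_map_of_Nn (n : nat) (a : pmapN n) :=
  forall x y, a x = Some y -> inNn x /\ inNn y.

Definition pinjective (n : nat) (a : pmapN n) :=
  forall x y z, a x = Some z -> a y = Some z -> x = y.

Definition partial_isometry (n : nat) (a : pmapN n) :=
  [/\ partial_map_of_Nn a, pinjective a &
      forall x y u v, a x = Some u -> a y = Some v -> sqdist u v = sqdist x y].

Definition cofinite_pmap (n : nat) (a : pmapN n) :=
  (exists s : seq (pt n), forall x, inNn x -> a x = None -> x \in s) /\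
  (exists s : seq (pt n), forall y, inNn y -> (forall x, a x <> Some y) -> y \in s).

Definition IN_infty (n : nat) (a : pmapN n) : Prop :=
  partial_isometry a /\ cofinite_pmap a.

From mathcomp Require Import all_boot all_algebra all_fingroup.
From mathcomp Require Import ring zify.
From Stdlib Require Import ClassicalEpsilon FunctionalExtensionality.
Set Implicit Arguments. Unset Strict Implicit. Unset Printing Implicit Defensive.
Import GRing.Theory Num.Theory.

(* Every element of IN_infty^n is a restriction of the map x |-> x o g
   induced by a permutation g of the coordinates; these maps are total on
   N^n, hence maximal, and g is determined by any cofinite restriction.
   To find g for a cofinite partial isometry a, pick a base point o far from
   the finite complement of dom a.  By polarization a preserves the integer
   inner products of differences from o, so the vectors a(o + e_i) - a(o)
   form an orthonormal integer family, i.e. a signed permutation: a is affine,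
   (a p)_(pi i) = (a o)_(pi i) + eps_i (p_i - o_i).  Positivity of the image
   forces eps_i = 1 and (a o)_(pi i) >= o_i, and cofiniteness of the range
   forces (a o)_(pi i) <= o_i; the last two need n >= 2, so that a point
   with one small coordinate can still be pushed far from the finite
   exceptional sets by another coordinate. *)

Section Coordinates.
Variable n : nat.
Local Open Scope ring_scope.

Definition zcoord (x : pt n) (i : 'I_n) : int := (tnth x i)%:Z.
Definition zsub (x y : pt n) : 'I_n -> int := fun i => zcoord x i - zcoord y i.
Definition dotz (u v : 'I_n -> int) : int := \sum_i u i * v i.

Lemma absdiff_sqrz (a b : nat) : ((absdiff a b ^ 2)%N)%:Z = (a%:Z - b%:Z) ^+ 2.
Proof.
rewrite /absdiff; case: (leqP a b) => h.
  by rewrite -natz natrX natz -(subzn h) -sqrrN opprB.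
by rewrite -natz natrX natz (subzn (ltnW h)).
Qed.

Lemma sqdistE (x y : pt n) : (sqdist x y)%:Z = dotz (zsub x y) (zsub x y).
Proof.
rewrite /sqdist /dotz -natz natr_sum; apply: eq_bigr => i _.
by rewrite natz absdiff_sqrz expr2.
Qed.

Lemma dotz_polar (x y u v : pt n) :
  2 * dotz (zsub x y) (zsub u v) =
  dotz (zsub x v) (zsub x v) + dotz (zsub y u) (zsub y u)
  - dotz (zsub x u) (zsub x u) - dotz (zsub y v) (zsub y v).
Proof.
rewrite /dotz mulr_sumr -big_split /= -sumrB -sumrB.
by apply: eq_bigr => i _; rewrite /zsub; ring.
Qed.

Lemma dotz_supp1 (u v : 'I_n -> int) j :
  (forall k, k != j -> v k = 0) -> dotz u v = u j * v j.
Proof.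
move=> v0; rewrite /dotz (bigD1 j) //= big1 ?addr0 // => k /v0 ->.
by rewrite mulr0.
Qed.

Lemma dotz_unit (u : 'I_n -> int) : dotz u u = 1 ->
  exists j, u j ^+ 2 = 1 /\ forall k, k != j -> u k = 0.
Proof.
move=> uu1.
have [j uj] : exists j, u j != 0.
  case: (pickP (fun j => u j != 0)) => [j hj|u0]; first by exists j.
  move: uu1; rewrite /dotz big1 // => i _.
  by move: (u0 i) => /negbFE /eqP ->; rewrite mulr0.
have sq_ge0 i : 0 <= u i * u i by rewrite -expr2 sqr_ge0.
have uj_ge1 : 0 < u j * u j by rewrite -expr2 exprn_even_gt0.
move: uu1; rewrite /dotz (bigD1 j) //=; set rest := \sum_(i | _) _ => uu1.
have rest0 : rest = 0.
  have : 0 <= rest by apply: sumr_ge0 => i _.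
  lia.
exists j; split; first by rewrite expr2; lia.
move=> k kj; have /eqP := psumr_eq0P (fun i _ => sq_ge0 i) rest0 kj.
by rewrite mulf_eq0 orbb => /eqP.
Qed.

Definition coord_bound (s : seq (pt n)) : nat := \sum_(x <- s) \sum_i tnth x i.

Lemma notin_coord_bound (x : pt n) s i : (coord_bound s < tnth x i)%N -> x \notin s.
Proof.
apply: contraTN; rewrite -leqNgt; elim: s => //= y s IH.
rewrite inE /coord_bound big_cons => /orP [/eqP->|/IH xs].
  by apply: leq_trans (leq_addr _ _); rewrite (bigD1 i) //= leq_addr.
exact: leq_trans xs (leq_addl _ _).
Qed.

Definition mkpt (f : 'I_n -> nat) : pt n := [tuple f i | i < n].

Lemma tnth_mkpt f i : tnth (mkpt f) i = f i.
Proof. exact: tnth_mktuple. Qed.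

Lemma inNn_mkpt f : (forall i, (0 < f i)%N) -> inNn (mkpt f).
Proof. by move=> f_gt0; apply/all_tnthP => i; rewrite tnth_mkpt. Qed.

Lemma inNn_tnth (x : pt n) i : inNn x -> (0 < tnth x i)%N.
Proof. by move/all_tnthP. Qed.

Definition pt_perm (g : {perm 'I_n}) (x : pt n) : pt n := mkpt (fun j => tnth x (g j)).

Lemma pt_perm_inj g : injective (pt_perm g).
Proof.
move=> x y /(congr1 (fun t => tnth t (g^-1%g _))) /= xy.
by apply: eq_from_tnth => j; move: (xy j); rewrite !tnth_mkpt permKV.
Qed.

Lemma pt_permK g y : pt_perm g (pt_perm g^-1%g y) = y.
Proof. by apply: eq_from_tnth => j; rewrite !tnth_mkpt permK. Qed.

Lemma inNn_pt_perm g (x : pt n) : inNn x -> inNn (pt_perm g x).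
Proof. by move=> xN; apply: inNn_mkpt => j; apply: inNn_tnth. Qed.

Lemma sqdist_pt_perm g (x y : pt n) : sqdist (pt_perm g x) (pt_perm g y) = sqdist x y.
Proof.
rewrite /sqdist [RHS](reindex_inj (@perm_inj _ g)) /=.
by apply: eq_bigr => i _; rewrite !tnth_mkpt.
Qed.

End Coordinates.

Arguments mkpt {n}.

Lemma exists_ord_neq n (i : 'I_n) : (1 < n)%N -> exists j, j != i.
Proof.
move=> n_gt1; have n_gt0 : (0 < n)%N by apply: ltnW.
case: (eqVneq i (Ordinal n_gt0)) => [->|ne]; last by exists (Ordinal n_gt0); rewrite eq_sym.
by exists (Ordinal n_gt1); apply/eqP => /(congr1 val).
Qed.

Section Rigidity.
Variables (n : nat) (a : pmapN n) (sd sr : seq (pt n)).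
Hypothesis n_gt1 : (1 < n)%N.
Hypothesis a_map : partial_map_of_Nn a.
Hypothesis a_iso : forall x y u v, a x = Some u -> a y = Some v -> sqdist u v = sqdist x y.
Hypothesis a_dom : forall x, inNn x -> a x = None -> x \in sd.
Hypothesis a_ran : forall y, inNn y -> (forall x, a x <> Some y) -> y \in sr.
Local Open Scope ring_scope.

Let K := (coord_bound sd).+1.
Let o : pt n := mkpt (fun _ => K).
Let img x := odflt o (a x).
Let ao := img o.

Lemma a_far x i : inNn x -> (K <= tnth x i)%N -> a x = Some (img x).
Proof.
move=> xN far; rewrite /img; case ax: (a x) => //.
by move: (a_dom xN ax); rewrite (negbTE (notin_coord_bound far)).
Qed.

Lemma img_gt0 x y j : a x = Some y -> 0 < zcoord y j.
Proof. by move=> /a_map [_ yN]; rewrite ltz_nat inNn_tnth. Qed.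

Lemma a_o : a o = Some ao.
Proof.
by apply: (@a_far _ (Ordinal (ltnW n_gt1))); rewrite ?inNn_mkpt ?tnth_mkpt.
Qed.

Lemma dotz_img p q p' q' : a p = Some p' -> a q = Some q' ->
  dotz (zsub p' ao) (zsub q' ao) = dotz (zsub p o) (zsub q o).
Proof.
move=> ap aq; apply: (@mulfI _ 2) => //; rewrite !dotz_polar -!sqdistE.
by rewrite (a_iso ap a_o) (a_iso a_o aq) (a_iso ap aq) (a_iso a_o a_o).
Qed.

Let e i : pt n := mkpt (fun j => K + (j == i))%N.
Let f i := zsub (img (e i)) ao.

Lemma a_e i : a (e i) = Some (img (e i)).
Proof. by apply: (@a_far _ i); rewrite ?inNn_mkpt ?tnth_mkpt ?leq_addr. Qed.

Lemma dotz_zsub_e u i : dotz u (zsub (e i) o) = u i.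
Proof.
rewrite (@dotz_supp1 _ _ _ i).
  by rewrite /zsub /zcoord !tnth_mkpt eqxx; lia.
by move=> k ki; rewrite /zsub /zcoord !tnth_mkpt (negbTE ki) addn0 subrr.
Qed.

Lemma f_orthonormal i k : dotz (f i) (f k) = (i == k)%:Z.
Proof.
rewrite (dotz_img (a_e i) (a_e k)) dotz_zsub_e /zsub /zcoord !tnth_mkpt eq_sym.
lia.
Qed.

Let pi i := odflt i [pick j | f i j != 0].
Let eps i := f i (pi i).

Lemma f_pi i : eps i ^+ 2 = 1 /\ forall k, k != pi i -> f i k = 0.
Proof.
have [j [fij2 fi0]] : exists j, f i j ^+ 2 = 1 /\ forall k, k != j -> f i k = 0.
  by apply: dotz_unit; rewrite f_orthonormal eqxx.
have fij : f i j != 0 by apply: contra_eqN fij2 => /eqP->; rewrite expr0n.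
rewrite /eps /pi; case: pickP => [j' /= fij'|f0]; last by move: (f0 j); rewrite /= fij.
suff -> : j' = j by [].
by apply: contraTeq fij' => j'j; rewrite fi0 ?eqxx.
Qed.

Lemma eps_neq0 i : eps i != 0.
Proof. by apply: contra_eqN (proj1 (f_pi i)) => /eqP->; rewrite expr0n. Qed.

Lemma dotz_f u i : dotz u (f i) = u (pi i) * eps i.
Proof. by apply: dotz_supp1; case: (f_pi i). Qed.

Lemma pi_inj : injective pi.
Proof.
move=> i k pik; apply/eqP; apply: contraT => ik.
have /eqP := f_orthonormal i k; rewrite (negbTE ik) dotz_f -pik mulf_eq0.
by rewrite (negbTE (eps_neq0 i)) (negbTE (eps_neq0 k)).
Qed.

Lemma img_affine p p' i : a p = Some p' ->
  zcoord p' (pi i) = zcoord ao (pi i) + eps i * (zcoord p i - K%:Z).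
Proof.
move=> ap; have := dotz_img ap (a_e i).
rewrite dotz_f dotz_zsub_e /zsub /zcoord tnth_mkpt => <-.
rewrite mulrCA -expr2 (proj1 (f_pi i)) mulr1; lia.
Qed.

(* A negative sign would send the point o + m e_i, with m = (a o)_(pi i), to
   a point with a zero coordinate. *)
Lemma eps_eq1 i : eps i = 1.
Proof.
have: eps i ^+ 2 == 1 by rewrite (proj1 (f_pi i)).
rewrite sqrf_eq1 => /orP [/eqP //|/eqP eps_N1]; exfalso.
pose m := tnth ao (pi i).
have [p' ap] : exists p', a (mkpt (fun j => K + (j == i) * m)%N) = Some p'.
  by eexists; apply: (@a_far _ i); rewrite ?inNn_mkpt ?tnth_mkpt ?leq_addr.
have := img_affine i ap; have := img_gt0 (pi i) ap.
rewrite eps_N1 /zcoord tnth_mkpt eqxx mul1n /m; lia.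
Qed.

Lemma ao_pi_ge i : (K <= tnth ao (pi i))%N.
Proof.
rewrite leqNgt; apply/negP => ao_lt; have [j ji] := exists_ord_neq i n_gt1.
have [p' ap] : exists p', a (mkpt (fun k => if k == i then 1 else K)%N) = Some p'.
  eexists; apply: (@a_far _ j); first by apply: inNn_mkpt => k; case: (k == i).
  by rewrite tnth_mkpt (negbTE ji).
have := img_affine i ap; have := img_gt0 (pi i) ap.
rewrite eps_eq1 /zcoord tnth_mkpt eqxx; lia.
Qed.

Lemma ao_pi_le i : (tnth ao (pi i) <= K)%N.
Proof.
rewrite leqNgt; apply/negP => ao_gt; have [j ji] := exists_ord_neq (pi i) n_gt1.
pose y : pt n := mkpt (fun k => if k == pi i then 1 else (coord_bound sr).+1)%N.
have yN : inNn y by apply: inNn_mkpt => k; case: (k == pi i).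
have [x ax] : exists x, a x = Some y.
  apply: NNPP => no_pre; have := a_ran yN (fun x ax => no_pre (ex_intro _ x ax)).
  by rewrite (negbTE (@notin_coord_bound _ _ _ j _)) // tnth_mkpt (negbTE ji).
have := img_affine i ax; have := inNn_tnth i (a_map ax).1.
rewrite eps_eq1 /zcoord tnth_mkpt eqxx; lia.
Qed.

Lemma img_pi p p' i : a p = Some p' -> tnth p' (pi i) = tnth p i.
Proof.
move=> ap; have := img_affine i ap; have := ao_pi_ge i; have := ao_pi_le i.
rewrite eps_eq1 /zcoord; lia.
Qed.

Lemma cofinite_isometry_perm : exists g, forall x y, a x = Some y -> y = pt_perm g x.
Proof.
exists (perm pi_inj)^-1%g => x y axy; apply: eq_from_tnth => j.
by rewrite tnth_mkpt -{1}(permKV (perm pi_inj) j) permE (img_pi _ axy).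
Qed.

End Rigidity.

Lemma IN_infty_perm n (a : pmapN n) : (1 < n)%N -> IN_infty a ->
  exists g, forall x y, a x = Some y -> y = pt_perm g x.
Proof.
move=> n_gt1 [[a_map _ a_iso] [[sd a_dom] [sr a_ran]]].
exact: cofinite_isometry_perm a_map a_iso a_dom a_ran.
Qed.

Section InverseSemigroup.
Variable n : nat.
Implicit Types a b c e : pmapN n.

Definition pinv a : pmapN n := fun y =>
  match excluded_middle_informative (exists x, a x = Some y) with
  | left ex => Some (proj1_sig (constructive_indefinite_description _ ex))
  | right _ => None
  end.

Lemma pinvP a : pinjective a -> forall x y, pinv a y = Some x <-> a x = Some y.
Proof.
move=> a_inj x y; rewrite /pinv; case: excluded_middle_informative => [ex|no_pre].
  case: constructive_indefinite_description => x' ax' /=.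
  by split=> [[<-] //|ax]; rewrite (a_inj _ _ _ ax ax').
by split=> // ax; case: no_pre; exists x.
Qed.

Lemma pmcomp_assoc a b c : pmcomp a (pmcomp b c) = pmcomp (pmcomp a b) c.
Proof. by apply: functional_extensionality => x; rewrite /pmcomp; case: (a x). Qed.

Lemma pmcomp_IN a b : IN_infty a -> IN_infty b -> IN_infty (pmcomp a b).
Proof.
case=> [[Ma Ia Sa] [[da Hda] [ra Hra]]] [[Mb Ib Sb] [[db Hdb] [rb Hrb]]].
split; first split.
- move=> x z; rewrite /pmcomp; case ax: (a x) => [y|] //= bz.
  by split; [exact: (Ma _ _ ax).1 | exact: (Mb _ _ bz).2].
- move=> x x' z; rewrite /pmcomp.
  case ax: (a x) => [y|] //=; case ax': (a x') => [y'|] //= bz bz'.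
  by move: ax'; rewrite -(Ib _ _ _ bz bz'); apply: Ia.
- move=> x x' z z'; rewrite /pmcomp.
  case ax: (a x) => [y|] //=; case ax': (a x') => [y'|] //= bz bz'.
  by rewrite (Sb _ _ _ _ bz bz') (Sa _ _ _ _ ax ax').
split.
- exists (da ++ pmap (pinv a) db) => x xN; rewrite /pmcomp mem_cat.
  case ax: (a x) => [y|] /= bz; last by rewrite Hda.
  apply/orP; right; rewrite mem_pmap.
  have <- : pinv a y = Some x by apply/pinvP.
  by apply: map_f; apply: Hdb => //; exact: (Ma _ _ ax).2.
- exists (rb ++ pmap b ra) => z zN no_pre; rewrite mem_cat.
  case: (excluded_middle_informative (exists y, b y = Some z)) => [[y bz]|no_preb].
    apply/orP; right; rewrite mem_pmap -bz; apply: map_f; apply: Hra.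
      exact: (Mb _ _ bz).1.
    by move=> x ax; apply: (no_pre x); rewrite /pmcomp ax.
  by rewrite Hrb // => y bz; apply: no_preb; exists y.
Qed.

Lemma pinv_IN a : IN_infty a -> IN_infty (pinv a).
Proof.
case=> [[Ma Ia Sa] [[da Hda] [ra Hra]]]; have aP := pinvP Ia.
split; first split.
- by move=> y x /aP /Ma [].
- by move=> y y' x /aP ax /aP; rewrite ax => -[].
- by move=> y y' x x' /aP ax /aP ax'; rewrite (Sa _ _ _ _ ax ax').
split.
- exists ra => y yN ay; apply: Hra => // x ax.
  by move: ay; rewrite (proj2 (aP x y) ax).
- exists da => x xN no_pre; apply: Hda => //; case ax: (a x) => [y|] //.
  by case: (no_pre y); apply/aP.
Qed.

Lemma pinv_inverse a : pinjective a ->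
  pmcomp (pmcomp a (pinv a)) a = a /\ pmcomp (pmcomp (pinv a) a) (pinv a) = pinv a.
Proof.
move=> a_inj; have aP := pinvP a_inj.
split; apply: functional_extensionality => x; rewrite /pmcomp.
  by case ax: (a x) => [y|] //=; rewrite (proj2 (aP x y) ax) /= ax.
by case ax: (pinv a x) => [y|] //=; rewrite (proj1 (aP y x) ax) /= ax.
Qed.

Lemma inverse_eq_pinv a b : pinjective a -> pinjective b ->
  pmcomp (pmcomp a b) a = a -> pmcomp (pmcomp b a) b = b -> b = pinv a.
Proof.
move=> a_inj b_inj aba bab; have aP := pinvP a_inj.
apply: functional_extensionality => y; case bx: (b y) => [x|].
  have := congr1 (fun f => f y) bab; rewrite /pmcomp bx /=.
  case ax: (a x) => [z|] //= bz.
  by move: ax; rewrite -(b_inj _ _ _ bz bx) => /aP ->.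
case ay: (pinv a y) => [x|] //; have ax := proj1 (aP x y) ay.
by have := congr1 (fun f => f x) aba; rewrite /pmcomp ax /= bx.
Qed.

Lemma IN_infty_inverse_semigroup : inverse_semigroup (@IN_infty n) (@pmcomp n).
Proof.
split=> [a b|a b c _ _ _|a Sa]; first exact: pmcomp_IN.
  exact: pmcomp_assoc.
have [[_ a_inj _] _] := Sa.
exists (pinv a); split; first by split; [apply: pinv_IN | apply: pinv_inverse].
move=> b [[[_ b_inj _] _] [aba bab]]; exact/esym/inverse_eq_pinv.
Qed.

Notation S := (@IN_infty n).
Notation mul := (@pmcomp n).

Definition perm_pmap (g : {perm 'I_n}) : pmapN n :=
  fun x => if inNn x then Some (pt_perm g x) else None.

Lemma perm_pmap_IN g : S (perm_pmap g).
Proof.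
split; first split.
- by move=> x y; rewrite /perm_pmap; case: ifP => // xN [<-]; rewrite inNn_pt_perm.
- move=> x y z; rewrite /perm_pmap; do 2 case: ifP => //.
  by move=> _ _ <- /Some_inj /pt_perm_inj.
- by move=> x y u v; rewrite /perm_pmap; do 2 case: ifP => //; move=> _ _ [<-] [<-]; apply: sqdist_pt_perm.
split.
- by exists [::] => x xN; rewrite /perm_pmap xN.
- exists [::] => y yN no_pre; case: (no_pre (pt_perm g^-1%g y)).
  by rewrite /perm_pmap inNn_pt_perm // pt_permK.
Qed.

Lemma idempotent_sub_id e : S e -> mul e e = e -> forall y z, e y = Some z -> z = y.
Proof.
case=> [[_ e_inj _] _] ee y z ey.
have : pmcomp e e y = e y by rewrite ee.
by rewrite /pmcomp ey /= => ez; apply: e_inj ez _; rewrite ey.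
Qed.

Lemma npo_sub s t : npo S mul s t -> forall x y, s x = Some y -> t x = Some y.
Proof.
case=> e [[Se ee] ->] x y; rewrite /pmcomp; case tx: (t x) => [z|] //= ez.
by rewrite (idempotent_sub_id Se ee ez).
Qed.

Lemma npo_perm_pmap a g : S a -> (forall x y, a x = Some y -> y = pt_perm g x) ->
  npo S mul a (perm_pmap g).
Proof.
move=> Sa a_g; have [[a_map a_inj _] _] := Sa; have aP := pinvP a_inj.
pose e := pmcomp (pinv a) a.
have e_id y : e y = None \/ e y = Some y.
  rewrite /e /pmcomp; case ay: (pinv a y) => [x|] /=; last by left.
  by right; apply/aP.
exists e; split; first split.
- by apply: pmcomp_IN => //; apply: pinv_IN.
- apply: functional_extensionality => y; rewrite {1}/pmcomp.
  by case: (e_id y) => ey; rewrite ey //= ey.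
apply: functional_extensionality => x; rewrite /pmcomp /perm_pmap.
case ax: (a x) => [y|].
  have [xN _] := a_map _ _ ax.
  by rewrite xN /= -(a_g _ _ ax) /e /pmcomp (proj2 (aP x y) ax) /= ax.
case: ifP => // xN /=; rewrite /e /pmcomp.
case ay: (pinv a (pt_perm g x)) => [x'|] //=.
move/aP: ay => ax'; have /pt_perm_inj x'x := a_g _ _ ax'.
by rewrite x'x ax' in ax.
Qed.

Lemma perm_pmap_maximal g : npo_maximal S mul (perm_pmap g).
Proof.
split=> [|u Su le_gu]; first exact: perm_pmap_IN.
have [[u_map _ _] _] := Su.
apply: functional_extensionality => x; rewrite /perm_pmap; case: ifP => xN.
  by apply: (npo_sub le_gu); rewrite /perm_pmap xN.
by case ux: (u x) => [y|] //; have [] := u_map _ _ ux; rewrite xN.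
Qed.

(* Evaluate s at a far point with pairwise distinct coordinates. *)
Lemma pt_perm_restr_uniq s g g' : S s ->
  (forall x y, s x = Some y -> y = pt_perm g x) ->
  (forall x y, s x = Some y -> y = pt_perm g' x) -> g = g'.
Proof.
case=> [_ [[sd s_dom] _]] s_g s_g'; apply/permP => j.
pose x : pt n := mkpt (fun k : 'I_n => (coord_bound sd).+1 + k)%N.
have xN : inNn x by apply: inNn_mkpt.
case sx: (s x) => [y|]; last first.
  by move: (s_dom x xN sx); rewrite (negbTE (@notin_coord_bound _ _ _ j _)) // tnth_mkpt; lia.
have /(congr1 (fun t => tnth t j)) := etrans (esym (s_g _ _ sx)) (s_g' _ _ sx).
rewrite /= !tnth_mkpt => gj; apply: ord_inj; lia.
Qed.

End InverseSemigroup.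

Theorem corollary4p1 (n : nat) (hn : 2 <= n) :
  @F_inverse (pmapN n) (@IN_infty n) (@pmcomp n).
Proof.
split=> [|s Ss]; first exact: IN_infty_inverse_semigroup.
have [g s_g] := IN_infty_perm hn Ss.
exists (perm_pmap g); split.
  by split; [apply: perm_pmap_maximal | exact: npo_perm_pmap].
move=> t [[St t_max] s_t]; have [g' t_g'] := IN_infty_perm hn St.
have <- : perm_pmap g' = t by apply: t_max; [apply: perm_pmap_IN | exact: npo_perm_pmap].
congr perm_pmap; apply: pt_perm_restr_uniq Ss s_g _ => x y /(npo_sub s_t).
exact: t_g'.
Qed.
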